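(* For all $t,n>0$ and every non-decreasing positive function $f$, there exists $T$ such that the following holds. Let $Z$ and $U$ be sets of points of a metric space with metric $d$ such that $|Z|\le n$ and for every $u\in U$ there exists $z\in Z$ with $d(u,z)<t$. Then there exist a subset $Z'\subseteq Z$ and a number $t'\le T$ such that \begin{itemize} \item for every $u\in U$ there exists $z\in Z'$ with $d(u,z)<t'$, and \item for distinct $z_1,z_2\in Z'$, $d(z_1,z_2)\ge f(t')$. \end{itemize} Furthermore, if $Z''\subseteq Z$ is a set whose elements are pairwise at distance at least $T$, then $Z'$ can be chosen so that $Z''\subseteq Z'$. *)

From Stdlib Require Import Reals List.
Open Scope R_scope.

Definition is_metric {X : Type} (d : X -> X -> R) : Prop :=
  (forall x y, 0 <= d x y) /\
  (forall x y, d x y = 0 <-> x = y) /\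
  (forall x y, d x y = d y x) /\
  (forall x y z, d x z <= d x y + d y z).

Definition card_le {X : Type} (S : X -> Prop) (n : nat) : Prop :=
  exists l : list X, NoDup l /\ (length l <= n)%nat /\ (forall x, S x <-> In x l).

Definition subset {X : Type} (A B : X -> Prop) : Prop := forall x, A x -> B x.

Definition covers {X : Type} (d : X -> X -> R) (Z U : X -> Prop) (r : R) : Prop :=
  forall u, U u -> exists z, Z z /\ d u z < r.

Definition separated {X : Type} (d : X -> X -> R) (S : X -> Prop) (r : R) : Prop :=
  forall z1 z2, S z1 -> S z2 -> z1 <> z2 -> r <= d z1 z2.

(* Grow the radius along t_0 = t, t_(k+1) = t_k + f t_k.  If the current centres are
   not f(t_k)-separated, two of them lie within f(t_k) of each other; deleting one of
   them (never one of Z'', whose points are T-separated with T >= f(t_k)) keeps U covered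
   at radius t_(k+1).  Each deletion removes a centre, so at most n steps happen and
   T = t_n works. *)
From Stdlib Require Import Reals Lra Lia List Classical.
Open Scope R_scope.

Fixpoint radii (f : R -> R) (t : R) (k : nat) : R :=
  match k with O => t | S k' => radii f t k' + f (radii f t k') end.

Section Radii.

Variables (f : R -> R) (t : R).
Hypothesis t_pos : 0 < t.
Hypothesis f_pos : forall x, 0 < x -> 0 < f x.

Lemma radii_pos k : 0 < radii f t k.
Proof. induction k as [|k IH]; simpl; [lra|]. pose proof (f_pos _ IH); lra. Qed.

Lemma radii_le k j : (k <= j)%nat -> radii f t k <= radii f t j.
Proof.
  induction 1 as [|j _ IH]; simpl; [lra|].
  pose proof (f_pos _ (radii_pos j)); lra.
Qed.

Lemma f_radii_le k n : (k < n)%nat -> f (radii f t k) <= radii f t n.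
Proof.
  intros Hkn. pose proof (radii_le (S k) n Hkn) as H; simpl in H.
  pose proof (radii_pos k); lra.
Qed.

End Radii.

Lemma card_le_0 {X : Type} (A : X -> Prop) x : card_le A 0 -> ~ A x.
Proof.
  intros [[|y l] [_ [Hlen HA]]] Hx; [exact (proj1 (HA x) Hx)|simpl in Hlen; lia].
Qed.

Lemma card_le_remove {X : Type} (A : X -> Prop) m b :
  card_le A (S m) -> A b -> card_le (fun x => A x /\ x <> b) m.
Proof.
  intros [l [Hnd [Hlen HA]]] Hb.
  destruct (in_split _ _ (proj1 (HA b) Hb)) as [l1 [l2 ->]].
  pose proof (NoDup_remove_2 _ _ _ Hnd) as Hb_out; rewrite in_app_iff in Hb_out.
  exists (l1 ++ l2); split; [exact (NoDup_remove_1 _ _ _ Hnd)|split].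
  - rewrite length_app in *; simpl in Hlen; lia.
  - intros x; rewrite HA, !in_app_iff; simpl; split.
    + intros [[H|[H|H]] Hxb]; tauto || congruence.
    + intros H; split; [tauto|]. intros ->; tauto.
Qed.

Lemma not_separated_pair {X : Type} (d : X -> X -> R) (A : X -> Prop) r :
  ~ separated d A r -> exists a b, A a /\ A b /\ a <> b /\ d a b < r.
Proof.
  intros Hns; apply NNPP; intros Hno; apply Hns; intros z1 z2 H1 H2 H12.
  apply Rnot_lt_le; intros Hlt; apply Hno; now exists z1, z2.
Qed.

Lemma close_pair_outside {X : Type} (d : X -> X -> R) (A Z'' : X -> Prop) r R :
  (forall x y, d x y = d y x) -> separated d Z'' R -> r <= R -> ~ separated d A r ->
  exists a b, A a /\ A b /\ a <> b /\ d a b < r /\ ~ Z'' b.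
Proof.
  intros Hsym Hsep HrR Hns.
  destruct (not_separated_pair d A r Hns) as (a & b & Ha & Hb & Hab & Hdab).
  destruct (classic (Z'' b)) as [Zb|Zb]; [|now exists a, b].
  destruct (classic (Z'' a)) as [Za|Za].
  - pose proof (Hsep a b Za Zb Hab); lra.
  - exists b, a; rewrite Hsym; auto.
Qed.

Lemma covers_remove_close {X : Type} (d : X -> X -> R) (A U : X -> Prop) r s a b :
  is_metric d -> covers d A U r -> A a -> a <> b -> d a b < s ->
  covers d (fun x => A x /\ x <> b) U (r + s).
Proof.
  intros (Hnn & _ & Hsym & Htri) Hcov Ha Hab Hdab u Hu.
  destruct (Hcov u Hu) as [z [Hz Hdz]]. pose proof (Hnn a b).
  destruct (classic (z = b)) as [->|Hzb].
  - exists a; split; [auto|]. pose proof (Htri u b a); rewrite (Hsym b a) in *; lra.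
  - exists z; split; [auto|lra].
Qed.

Section Pruning.

Variables (X : Type) (d : X -> X -> R) (f : R -> R) (t : R) (n : nat) (Z'' U : X -> Prop).
Hypothesis d_metric : is_metric d.
Hypothesis t_pos : 0 < t.
Hypothesis f_pos : forall x, 0 < x -> 0 < f x.
Hypothesis Z''_sep : separated d Z'' (radii f t n).

Lemma prune_keep_all k (A : X -> Prop) :
  (k <= n)%nat -> subset Z'' A -> covers d A U (radii f t k) ->
  separated d A (f (radii f t k)) ->
  exists (Z' : X -> Prop) (t' : R),
    subset Z' A /\ subset Z'' Z' /\ 0 < t' /\ t' <= radii f t n /\
    covers d Z' U t' /\ separated d Z' (f t').
Proof.
  intros Hkn HZ'' Hcov Hsep; exists A, (radii f t k).
  repeat split; auto using radii_pos, radii_le. now intros x.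
Qed.

Lemma prune_centres m : forall k (A : X -> Prop),
  (k + m <= n)%nat -> card_le A m -> subset Z'' A -> covers d A U (radii f t k) ->
  exists (Z' : X -> Prop) (t' : R),
    subset Z' A /\ subset Z'' Z' /\ 0 < t' /\ t' <= radii f t n /\
    covers d Z' U t' /\ separated d Z' (f t').
Proof.
  pose proof d_metric as (_ & _ & d_sym & _).
  induction m as [|m IH]; intros k A Hkm HA HZ'' Hcov.
  { apply (prune_keep_all k); auto; [lia|].
    intros z1 z2 H1; now destruct (card_le_0 A z1 HA). }
  destruct (classic (separated d A (f (radii f t k)))) as [Hsep|Hns].
  { apply (prune_keep_all k); auto; lia. }
  destruct (close_pair_outside d A Z'' (f (radii f t k)) (radii f t n) d_sym Z''_sep
              (f_radii_le f t t_pos f_pos k n ltac:(lia)) Hns)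
    as (a & b & Ha & Hb & Hab & Hdab & Hb'').
  destruct (IH (S k) (fun x => A x /\ x <> b)) as (Z' & t' & HZ'A & H).
  - lia.
  - exact (card_le_remove A m b HA Hb).
  - intros x Hx; split; [auto|]. intros ->; contradiction.
  - exact (covers_remove_close d A U _ _ a b d_metric Hcov Ha Hab Hdab).
  - exists Z', t'; split; [|exact H]. intros x Hx; apply HZ'A, Hx.
Qed.

End Pruning.

Theorem lemma18 :
  forall (t : R) (n : nat) (f : R -> R),
    0 < t -> (0 < n)%nat ->
    (forall x y, 0 < x -> x <= y -> f x <= f y) ->
    (forall x, 0 < x -> 0 < f x) ->
    exists T : R,
      forall (X : Type) (d : X -> X -> R) (Z U : X -> Prop),
        is_metric d -> card_le Z n -> covers d Z U t ->
        (exists (Z' : X -> Prop) (t' : R),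
            subset Z' Z /\ 0 < t' /\ t' <= T /\
            covers d Z' U t' /\ separated d Z' (f t')) /\
        (forall Z'' : X -> Prop, subset Z'' Z -> separated d Z'' T ->
          exists (Z' : X -> Prop) (t' : R),
            subset Z' Z /\ subset Z'' Z' /\ 0 < t' /\ t' <= T /\
            covers d Z' U t' /\ separated d Z' (f t')).
Proof.
  intros t n f Ht _ _ Hf. exists (radii f t n).
  intros X d Z U Hd HZ Hcov.
  assert (Hprune : forall Z'', subset Z'' Z -> separated d Z'' (radii f t n) ->
            exists (Z' : X -> Prop) (t' : R),
              subset Z' Z /\ subset Z'' Z' /\ 0 < t' /\ t' <= radii f t n /\
              covers d Z' U t' /\ separated d Z' (f t')).
  { intros Z'' HZ''Z HZ''sep.
    exact (prune_centres X d f t n Z'' U Hd Ht Hf HZ''sep n 0 Z (le_n n) HZ HZ''Z Hcov). }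
  split; [|exact Hprune].
  destruct (Hprune (fun _ => False)) as (Z' & t' & HZ' & _ & H);
    [intros x []|intros z1 z2 []|].
  now exists Z', t'.
Qed.
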